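(* Let $H_\alpha=-\Delta_\alpha+V$ be the Schrödinger operator with a periodic magnetic potential $\alpha$ and a periodic electric potential $V$ on a periodic graph $\mathcal G$, with $V$ normalized so that $\min_{x\in\mathcal V_*}V_x=\varkappa_+$, and let $n\in\mathbb N$. Then the total bandwidth of $H_\alpha^n$ satisfies $$\mathfrak S(H_\alpha^n)\le n(\operatorname{diam}V+\varkappa_+)^{n-1}\mathfrak S(H_\alpha),$$ $$\mathfrak S(H_\alpha^n)\ge\big|\operatorname{Tr}H_\alpha^n(k_1)-\operatorname{Tr}H_\alpha^n(k_2)\big|\qquad\text{for all }k_1,k_2\in\mathbb T^d.$$
   Context: Let $\Gamma\subset\mathbb R^d$ be a lattice with basis $\mathfrak a_1,\dots,\mathfrak a_d$ and fundamental cell $\Omega=\{\sum_sx_s\mathfrak a_s:(x_s)\in[0,1)^d\}$. Let $\mathcal G=(\mathcal V,\mathcal E)$ be a connected, locally finite, infinite graph embedded in $\mathbb R^d$ (loops, multiple edges allowed), invariant under $\Gamma$-translations, with finite quotient $\mathcal G_*=(\mathcal V_*,\mathcal E_* )$; $\nu=\#\mathcal V_*$. Oriented edges $\mathcal A,\mathcal A_*$; $\underline{\mathbf e}$ inverse; $\varkappa_x$ = number of oriented edges starting at $x$; $\varkappa_+=\max_{\mathcal V_*}\varkappa_x$; $\operatorname{diam}V=\max_{\mathcal V_*}V-\min_{\mathcal V_*}V$. Edge index: $x=x_0+[x]$, $x_0\in\mathcal V\cap\Omega$, $[x]\in\Gamma$ with coordinates $[x]_{\mathbb A}\in\mathbb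 Z^d$; $\tau((x,y))=[y]_{\mathbb A}-[x]_{\mathbb A}$, defined on $\mathcal A_*$. Periodic magnetic potential $\alpha:\mathcal A\to\mathbb R$ ($\alpha(\underline{\mathbf e})=-\alpha(\mathbf e)$, $\Gamma$-invariant); $V$ real $\Gamma$-periodic. $H_\alpha=-\Delta_\alpha+V$, $\Delta_\alpha=\varkappa-A_\alpha$, $(A_\alpha f)_x=\sum_{\mathbf e=(x,y)\in\mathcal A}e^{i\alpha(\mathbf e)}f_y$. Fiber operators $H_\alpha(k)=A_\alpha(k)-\varkappa+V$ on $\mathbb C^\nu$, $(A_\alpha(k)f)_x=\sum_{\mathbf e=(x,y)\in\mathcal A_*}e^{i(\alpha(\mathbf e)+\langle\tau(\mathbf e),k\rangle)}f_y$, $k\in\mathbb T^d=\mathbb R^d/(2\pi\mathbb Z)^d$, eigenvalues $\lambda_{\alpha,1}(k)\le\dots\le\lambda_{\alpha,\nu}(k)$. Bands $\sigma_j(H_\alpha)=\lambda_{\alpha,j}(\mathbb T^d)$ and $\sigma_j(H_\alpha^n)=\{\lambda_{\alpha,j}(k)^n:k\in\mathbb T^d\}$ (so $|\sigma_j(H_\alpha^n)|=\max_k\lambda_{\alpha,j}^n(k)-\min_k\lambda_{\alpha,j}^n(k)$); $\mathfrak S(H_\alpha^n)=\sum_{j=1}^\nu|\sigma_j(H_\alpha^n)|$. *)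

From HB Require Import structures.
From Stdlib Require Import Relations.
From mathcomp Require Import all_boot all_order all_algebra.
From mathcomp Require Import all_classical all_reals all_analysis.
From mathcomp Require Import complex.
Set Implicit Arguments. Unset Strict Implicit. Unset Printing Implicit Defensive.
Import Order.TTheory GRing.Theory Num.Theory.
Local Open Scope ring_scope.
Local Open Scope complex_scope.

(* Quotient graph data of a Z^d-periodic graph:
   vertices 'I_nu, finite set E of oriented edges of the quotient,
   src/tgt, edge inversion inv, edge index tau : E -> Z^d. *)

(* vertices of the periodic graph G: (x0, [x]) with x0 : 'I_nu, [x] in Z^d *)
Definition lift_adj (nu d : nat) (E : finType) (src tgt : E -> 'I_nu)
  (tau : E -> 'I_d -> int) (u v : 'I_nu * ('I_d -> int)) : Prop :=
  exists e : E, [/\ src e = u.1, tgt e = v.1 & forall s, v.2 s = u.2 s + tau e s].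

Definition periodic_graph_connected (nu d : nat) (E : finType)
  (src tgt : E -> 'I_nu) (tau : E -> 'I_d -> int) : Prop :=
  forall u v, clos_refl_trans _ (lift_adj src tgt tau) u v.

Definition kappa (nu : nat) (E : finType) (src : E -> 'I_nu) (x : 'I_nu) : nat :=
  #|[set e | src e == x]|.

Definition kappa_plus (nu : nat) (E : finType) (src : E -> 'I_nu) : nat :=
  \max_(x : 'I_nu) kappa src x.

Definition expi (R : realType) (t : R) : R[i] := cos t +i* sin t.

Definition fiberH (R : realType) (nu d : nat) (E : finType)
  (src tgt : E -> 'I_nu) (tau : E -> 'I_d -> int) (alpha : E -> R)
  (V : 'I_nu -> R) (k : 'I_d -> R) : 'M[R[i]]_nu :=
  \matrix_(x, y)
     ((\sum_(e : E | (src e == x) && (tgt e == y))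
          expi (alpha e + \sum_(s < d) (tau e s)%:~R * k s))
      + ((V x - (kappa src x)%:R)%:C) *+ (x == y)).

(* lam k : 'I_nu -> R is the nondecreasing list of eigenvalues
   (with multiplicity) of the Hermitian matrix M k *)
Definition is_sorted_eigenvalues (R : realType) (nu : nat)
  (M : 'M[R[i]]_nu) (lam : 'I_nu -> R) : Prop :=
  (forall i j : 'I_nu, (i <= j)%N -> lam i <= lam j) /\
  char_poly M = \prod_(j < nu) ('X - ((lam j)%:C)%:P).

Definition band_length (R : realType) (nu d : nat)
  (lam : ('I_d -> R) -> 'I_nu -> R) (n : nat) (j : 'I_nu) : R :=
  sup (range (fun k => lam k j ^+ n)) - inf (range (fun k => lam k j ^+ n)).

Definition total_bandwidth (R : realType) (nu d : nat)
  (lam : ('I_d -> R) -> 'I_nu -> R) (n : nat) : R :=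
  \sum_(j < nu) band_length lam n j.

Definition diamV (R : realType) (nu : nat) (V : 'I_nu -> R) : R :=
  sup (range V) - inf (range V).

(* Write A(k) for the hopping part of the fiber operator, so that
   H(k) = A(k) + diag(V_x - kappa_x).  The y-th column of A(k) is a sum of
   kappa_y unimodular terms (edge inversion matches edges into y with edges
   out of y), so Gershgorin's theorem for columns puts every eigenvalue of
   H(k) in [V_y - 2 kappa_y, V_y] for some y.  Since V >= kappa_+ this gives
   |lambda_j(k)| <= max V = diam V + kappa_+ =: M.  Then
   |a^n - b^n| <= n M^(n-1) |a - b| bounds each band of H^n by n M^(n-1)
   times the corresponding band of H.  By Schur triangularisation
   Tr H(k)^n = sum_j lambda_j(k)^n, and the j-th term varies by at most the
   length of the j-th band of H^n. *)

From Stdlib Require Import Relations.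
From mathcomp Require Import all_boot all_order all_algebra.
From mathcomp Require Import all_classical all_reals all_analysis.
From mathcomp Require Import complex.
From mathcomp Require Import lra.
Import Order.TTheory GRing.Theory Num.Theory.
Local Open Scope ring_scope.
Local Open Scope complex_scope.
Set Implicit Arguments. Unset Strict Implicit. Unset Printing Implicit Defensive.

Section TriangularPowers.
Variables (R : pzSemiRingType) (n : nat).
Implicit Types A B : 'M[R]_n.

Lemma is_trig_mxM A B : is_trig_mx A -> is_trig_mx B -> is_trig_mx (A *m B).
Proof.
move=> /is_trig_mxP trA /is_trig_mxP trB; apply/is_trig_mxP => i j lt_ij.
rewrite mxE big1 // => k _; have [lt_ik | le_ki] := ltnP i k.
  by rewrite trA ?mul0r.
by rewrite trB ?mulr0 // (leq_ltn_trans le_ki).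
Qed.

Lemma trig_mxM_diag A B i : is_trig_mx A -> is_trig_mx B ->
  (A *m B) i i = A i i * B i i.
Proof.
move=> /is_trig_mxP trA /is_trig_mxP trB; rewrite mxE (bigD1 i) //= big1 ?addr0 //.
move=> k /negbTE neq_ki; case: (ltngtP i k) => [lt_ik | lt_ki | /val_inj eq_ik].
- by rewrite trA ?mul0r.
- by rewrite trB ?mulr0.
- by rewrite eq_ik eqxx in neq_ki.
Qed.

Lemma is_trig_mxX A m : is_trig_mx A -> is_trig_mx (A ^+ m).
Proof.
move=> trA; elim: m => [|m trAm]; last by rewrite exprS -mulmxE is_trig_mxM.
by rewrite expr0 scalar_mx_is_trig.
Qed.

Lemma trig_mxX_diag A m i : is_trig_mx A -> (A ^+ m) i i = A i i ^+ m.
Proof.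
move=> trA; elim: m => [|m IHm]; first by rewrite !expr0 mxE eqxx.
by rewrite !exprS -mulmxE trig_mxM_diag ?IHm ?is_trig_mxX.
Qed.

End TriangularPowers.

Section Similarity.
Variables (F : fieldType) (n : nat) (P : 'M[F]_n).
Hypothesis P_unit : P \in unitmx.

Lemma conjmxX A m : conjmx P (A ^+ m) = conjmx P A ^+ m.
Proof.
elim: m => [|m IHm]; first by rewrite !expr0 conjmx_scalar ?row_free_unit.
by rewrite !exprS -!mulmxE conjmxM ?inE ?stablemx_unit // IHm.
Qed.

Lemma mxtrace_conjmx A : \tr (conjmx P A) = \tr A.
Proof. by rewrite conjumx // mxtrace_mulC mulmxA mulVmx ?mul1mx. Qed.

Lemma char_poly_conjmx A : char_poly (conjmx P A) = char_poly A.
Proof.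
rewrite conjumx // /char_poly /char_poly_mx.
set Q := map_mx polyC P; set Qi := map_mx polyC (invmx P).
have QQi : Q *m Qi = 1%:M by rewrite -map_mxM mulmxV // map_mx1.
have QiQ : Qi *m Q = 1%:M by rewrite -map_mxM mulVmx // map_mx1.
have -> : 'X%:M - map_mx polyC (P *m A *m invmx P)
    = Q *m ('X%:M - map_mx polyC A) *m Qi.
  by rewrite !map_mxM mulmxBr mulmxBl mul_mx_scalar -scalemxAl QQi scalemx1.
by rewrite !det_mulmx mulrC mulrA -det_mulmx QiQ det1 mul1r.
Qed.

End Similarity.

Lemma mxtraceX_eigen (C : numClosedFieldType) n (A : 'M[C]_n) (l : 'I_n -> C) m :
  char_poly A = \prod_(j < n) ('X - (l j)%:P) -> \tr (A ^+ m) = \sum_j l j ^+ m.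
Proof.
case: n A l => [|n] A l charA; first by rewrite /mxtrace !big_ord0.
have [P /unitarymx_unit P_unit trT] := Schur A (ltn0Sn n).
set T := conjmx P A in trT.
have diagT : perm_eq [seq T i i | i <- index_enum 'I_n.+1]
                     [seq l i | i <- index_enum 'I_n.+1].
  by apply: prod_XsubC_eq; rewrite !big_map -char_poly_trig // char_poly_conjmx.
rewrite -(mxtrace_conjmx P_unit) conjmxX // /mxtrace.
under eq_bigr do rewrite trig_mxX_diag //.
rewrite -(big_map (fun i => T i i) predT (fun x => x ^+ m)) (perm_big _ diagT).
by rewrite big_map.
Qed.

Lemma eigenvalue_gershgorin_col (R : rcfType) n (A : 'M[R[i]]_n)
    (c : 'I_n -> R[i]) a :
  eigenvalue A a -> exists y, `|a - c y| <= \sum_x `|A x y - c x *+ (x == y)|.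
Proof.
case/eigenvalueP=> v eig_v v_neq0.
have [x0 vx0_neq0] : exists x0, v 0 x0 != 0.
  apply/existsP; apply: contraNT v_neq0 => /existsPn v0.
  by apply/eqP/rowP => x; rewrite mxE; apply/eqP/negbNE/v0.
pose nv x := complex.Re `|v 0 x|.
have nvE x : `|v 0 x| = (nv x)%:C by rewrite RRe_real ?normr_real.
have [y _ max_y] := arg_maxP nv (isT : predT x0).
exists y; set B := fun x => A x y - c x *+ (x == y).
have vy_gt0 : 0 < `|v 0 y|.
  rewrite nvE ltcR (lt_le_trans _ (max_y x0 isT)) // -ltcR -nvE normr_gt0.
  exact: vx0_neq0.
have eig_y : v 0 y * (a - c y) = \sum_x v 0 x * B x.
  move/rowP/(_ y): eig_v; rewrite !mxE => eq_y.
  rewrite /B; under eq_bigr do rewrite mulrBr.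
  rewrite sumrB eq_y (bigD1 y) //= big1 ?addr0 => [|x /negbTE->]; last first.
    by rewrite mulr0n mulr0.
  by rewrite eqxx mulr1n mulrBr mulrC.
suff : `|v 0 y| * `|a - c y| <= `|v 0 y| * \sum_x `|B x|.
  by rewrite ler_pM2l.
rewrite -normrM eig_y mulr_sumr (le_trans (ler_norm_sum _ _ _)) //.
apply: ler_sum => x _; rewrite normrM ler_wpM2r // !nvE lecR; exact: max_y.
Qed.

Lemma dist_exprn_le (R : numDomainType) (x y M : R) m :
  `|x| <= M -> `|y| <= M -> `|x ^+ m - y ^+ m| <= m%:R * M ^+ m.-1 * `|x - y|.
Proof.
move=> le_xM le_yM; have M_ge0 : 0 <= M := le_trans (normr_ge0 x) le_xM.
rewrite subrXX normrM mulrC ler_wpM2r // (le_trans (ler_norm_sum _ _ _)) //.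
apply: (@le_trans _ _ (\sum_(i < m) M ^+ m.-1)); last first.
  by rewrite sumr_const card_ord mulr_natl.
apply: ler_sum => i _; have le_i : (i <= m.-1)%N by rewrite -ltnS (ltn_predK (ltn_ord i)).
rewrite normrM !normrX -[in M ^+ m.-1](subnK le_i) exprD.
by rewrite ler_pM ?exprn_ge0 ?lerXn2r ?nnegrE.
Qed.

Section Spread.
Variables (R : realType) (T : Type).
Implicit Types (g : T -> R) (M c : R).
Local Open Scope classical_set_scope.

Definition spread g := sup (range g) - inf (range g).

Lemma has_ubound_range_norm g M : (forall t, `|g t| <= M) -> has_ubound (range g).
Proof. by move=> le_gM; exists M => _ [t _ <-]; have /ler_normlP[] := le_gM t. Qed.

Lemma has_lbound_range_norm g M : (forall t, `|g t| <= M) -> has_lbound (range g).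
Proof.
by move=> le_gM; exists (- M) => _ [t _ <-]; have /ler_normlP[] := le_gM t; rewrite lerNl.
Qed.

Lemma spread_ge g M t1 t2 : (forall t, `|g t| <= M) -> g t1 - g t2 <= spread g.
Proof.
move=> le_gM; apply: lerB.
  by apply: (ub_le_sup (has_ubound_range_norm le_gM)); exists t1.
by apply: (ge_inf (has_lbound_range_norm le_gM)); exists t2.
Qed.

Lemma dist_le_spread g M t1 t2 : (forall t, `|g t| <= M) -> `|g t1 - g t2| <= spread g.
Proof.
by move=> le_gM; rewrite ler_norml lerNl opprB !(spread_ge _ _ le_gM).
Qed.

Lemma spread_le g c (t0 : T) : (forall t1 t2, g t1 - g t2 <= c) -> spread g <= c.
Proof.
move=> le_gc; rewrite lerBlDr.
apply: ge_sup; first by exists (g t0), t0.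
move=> _ [t1 _ <-]; rewrite -lerBlDl.
apply: lb_le_inf; first by exists (g t0), t0.
by move=> _ [t2 _ <-]; rewrite lerBlDl addrC -lerBlDl.
Qed.

Lemma spread_exprn_le g M m (t0 : T) : (forall t, `|g t| <= M) ->
  spread (fun t => g t ^+ m) <= m%:R * M ^+ m.-1 * spread g.
Proof.
move=> le_gM; have M_ge0 : 0 <= M := le_trans (normr_ge0 _) (le_gM t0).
apply: spread_le t0 _ => t1 t2.
apply: le_trans (ler_norm _) _; apply: le_trans (dist_exprn_le m (le_gM t1) (le_gM t2)) _.
rewrite ler_wpM2l ?mulr_ge0 ?exprn_ge0 //.
exact: dist_le_spread.
Qed.

End Spread.

Lemma band_length_spread (R : realType) nu d (lam : ('I_d -> R) -> 'I_nu -> R) n j :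
  band_length lam n j = spread (fun k => lam k j ^+ n).
Proof. by []. Qed.

Lemma le_sup_finrange (R : realType) (T : finType) (f : T -> R) x :
  f x <= sup (range f).
Proof.
have le_f t : `|f t| <= \sum_u `|f u| by rewrite (bigD1 t) //= lerDl sumr_ge0.
by apply: (ub_le_sup (has_ubound_range_norm le_f)); exists x.
Qed.

Lemma diamV_add_min (R : realType) nu (V : 'I_nu -> R) m :
  (forall x, m <= V x) -> (exists x, V x = m) -> diamV V + m = sup (range V).
Proof.
move=> m_le_V [x0 V_x0]; suff inf_V : inf (range V) = m by rewrite /diamV inf_V subrK.
apply/le_anti/andP; split.
  by rewrite -V_x0; apply: ge_inf; [exists m => _ [x _ <-] | exists x0].
by apply: lb_le_inf => [|_ [x _ <-]]; [exists (V x0), x0 | exact: m_le_V].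
Qed.

Lemma sorted_eigenvalues_root (R : realType) n (M : 'M[R[i]]_n) lam j :
  is_sorted_eigenvalues M lam -> root (char_poly M) (lam j)%:C.
Proof.
case=> _ ->; rewrite /root horner_prod (bigD1 j) //=.
by rewrite hornerXsubC subrr mul0r.
Qed.

Lemma normcR (R : rcfType) (a : R) : `|a%:C| = `|a|%:C.
Proof. by rewrite normc_def /= expr0n /= addr0 sqrtr_sqr. Qed.

Lemma norm_expi (R : realType) (t : R) : `|expi t| = 1.
Proof. by rewrite normc_def /= cos2Dsin2 sqrtr1. Qed.

Section FiberOperator.
Variables (R : realType) (nu d : nat) (E : finType).
Variables (src tgt : E -> 'I_nu) (inv : E -> E) (tau : E -> 'I_d -> int).
Variables (alpha : E -> R) (V : 'I_nu -> R).
Hypotheses (invK : involutive inv) (tgt_inv : forall e, tgt (inv e) = src e).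

Local Notation H := (fiberH src tgt tau alpha V).

Definition fiberA (k : 'I_d -> R) (x y : 'I_nu) : R[i] :=
  \sum_(e | (src e == x) && (tgt e == y))
     expi (alpha e + \sum_(s < d) (tau e s)%:~R * k s).

Lemma fiberHE k x y :
  H k x y = fiberA k x y + (V x - (kappa src x)%:R)%:C *+ (x == y).
Proof. by rewrite mxE. Qed.

Lemma card_in_edges y : #|[set e | tgt e == y]| = kappa src y.
Proof.
rewrite /kappa -!sum1_card (reindex_inj (can_inj invK)).
by apply: eq_bigl => e; rewrite !inE tgt_inv.
Qed.

Lemma fiberA_colsum_le k y : \sum_x `|fiberA k x y| <= (kappa src y)%:R.
Proof.
apply: (@le_trans _ _ (\sum_x \sum_(e | (src e == x) && (tgt e == y)) 1)).
  apply: ler_sum => x _; apply: le_trans (ler_norm_sum _ _ _) _.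
  by under eq_bigr do rewrite norm_expi.
rewrite -card_in_edges -sum1_card natr_sum (partition_big src predT) //=.
by under [X in _ <= X]eq_bigr do under eq_bigl do rewrite inE andbC.
Qed.

Lemma fiberH_eigenvalue_disc k (l : R) : root (char_poly (H k)) l%:C ->
  exists y, `|l - (V y - (kappa src y)%:R)| <= (kappa src y)%:R.
Proof.
rewrite -eigenvalue_root_char.
case/(eigenvalue_gershgorin_col (fun x => (V x - (kappa src x)%:R)%:C)) => y.
under eq_bigr do rewrite fiberHE addrK.
move=> /le_trans/(_ (fiberA_colsum_le k y)) disc_y; exists y.
by rewrite -lecR -normcR rmorphB /= rmorph_nat.
Qed.

Lemma fiberH_eigenvalue_norm_le k (l : R) :
  (forall x, (kappa_plus src)%:R <= V x) -> root (char_poly (H k)) l%:C ->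
  `|l| <= sup (range V).
Proof.
move=> V_ge /fiberH_eigenvalue_disc [y disc_y].
have kappa_le_V : (kappa src y)%:R <= V y.
  by apply: le_trans (V_ge y); rewrite ler_nat /kappa_plus (leq_bigmax y).
have V_le_sup := le_sup_finrange V y.
move: disc_y; rewrite !ler_norml => /andP[lb ub]; apply/andP; split; lra.
Qed.

End FiberOperator.

Theorem lemma4p2 (R : realType) (nu d : nat) (E : finType)
  (src tgt : E -> 'I_nu) (inv : E -> E) (tau : E -> 'I_d -> int)
  (alpha : E -> R) (V : 'I_nu -> R)
  (lam : ('I_d -> R) -> 'I_nu -> R) (n : nat) :
  (0 < d)%N ->
  (forall e, inv (inv e) = e) ->
  (forall e, src (inv e) = tgt e) ->
  (forall e, tgt (inv e) = src e) ->
  (forall e s, tau (inv e) s = - tau e s) ->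
  (forall e, alpha (inv e) = - alpha e) ->
  periodic_graph_connected src tgt tau ->
  (forall x, (kappa_plus src)%:R <= V x) ->
  (exists x, V x = (kappa_plus src)%:R) ->
  (forall k, is_sorted_eigenvalues (fiberH src tgt tau alpha V k) (lam k)) ->
  total_bandwidth lam n
    <= n%:R * (diamV V + (kappa_plus src)%:R) ^+ n.-1 * total_bandwidth lam 1
  /\
  (forall k1 k2 : 'I_d -> R,
     `| \tr (fiberH src tgt tau alpha V k1 ^+ n)
        - \tr (fiberH src tgt tau alpha V k2 ^+ n) |
       <= (total_bandwidth lam n)%:C).
Proof.
move=> _ invK _ tgt_inv _ _ _ V_ge V_min eig_lam.
have lam_le k j : `|lam k j| <= sup (range V).
  apply: (fiberH_eigenvalue_norm_le invK tgt_inv V_ge).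
  exact: sorted_eigenvalues_root (eig_lam k).
split.
  rewrite diamV_add_min // /total_bandwidth mulr_sumr; apply: ler_sum => j _.
  exact: spread_exprn_le (fun _ => 0) (lam_le ^~ j).
move=> k1 k2; rewrite !(mxtraceX_eigen n (eig_lam _).2) -sumrB rmorph_sum.
apply: le_trans (ler_norm_sum _ _ _) _; apply: ler_sum => j _.
rewrite -!rmorphXn -rmorphB normcR lecR band_length_spread.
apply: (dist_le_spread (g := fun k => lam k j ^+ n) (M := sup (range V) ^+ n)) => k.
by rewrite normrX lerXn2r ?nnegrE ?lam_le ?(le_trans _ (lam_le k j)).
Qed.
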